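(* Let $g:\mathbb{R}^n\to\mathbb{R}\cup\{+\infty\}$ be a proper closed convex function and let $f=f_1-f_2$, where $f_1,f_2:\mathbb{R}^n\to\mathbb{R}$ are convex differentiable functions such that $\nabla f_1$ is Lipschitz continuous with modulus $L>0$, $\nabla f_2$ is Lipschitz continuous with modulus $l\ge 0$, and $L\ge l$. Let $F=f+g$, and assume $\inf F>-\infty$ and that this infimum is attained. Let $\{x^k\}$ be generated by Algorithm 1 (described in the context) with $\bar\beta:=\sup_k\beta_k<\sqrt{L/(L+l)}$, and let $\Omega$ be the set of accumulation points of $\{x^k\}$. Then $\zeta:=\lim_{k\to\infty}F(x^k)$ exists and $F\equiv\zeta$ on $\Omega$.
   Context: For a proper closed convex $h$, $\mathrm{Prox}_h(v)=\arg\min_{x\in\mathbb{R}^n}\{h(x)+\tfrac12\|x-v\|^2\}$. Algorithm 1 (proximal gradient algorithm with extrapolation): choose $x^0\in\operatorname{dom} g$ and $\{\beta_k\}\subseteq[0,\sqrt{L/(L+l)}]$, set $x^{-1}=x^0$, and for $k=0,1,2,\dots$ set $y^k=x^k+\beta_k(x^k-x^{k-1})$ and $x^{k+1}=\mathrm{Prox}_{\frac1L g}\big(y^k-\tfrac1L\nabla f(y^k)\big)$. *)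

From HB Require Import structures.
From mathcomp Require Import all_boot all_order all_algebra.
From mathcomp Require Import all_classical all_reals all_analysis.
Set Implicit Arguments. Unset Strict Implicit. Unset Printing Implicit Defensive.
Import Order.TTheory GRing.Theory Num.Theory.
Import numFieldNormedType.Exports.
Local Open Scope classical_set_scope.
Local Open Scope ring_scope.

Section Defs.
Variables (R : realType) (n : nat).
Local Notation V := 'rV[R]_n.

Definition dotv (u v : V) : R := \sum_(i < n) u ord0 i * v ord0 i.
Definition enorm (u : V) : R := Num.sqrt (dotv u u).

Definition is_gradient (f : V -> R) (G : V -> V) : Prop :=
  forall x, differentiable f x /\ forall h, 'd f x h = dotv (G x) h.

Definition lipschitz_with (G : V -> V) (L : R) : Prop :=
  forall x y, enorm (G x - G y) <= L * enorm (x - y).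

Definition convex_fun (f : V -> R) : Prop :=
  forall (x y : V) (t : R), 0 <= t -> t <= 1 ->
    f (t *: x + (1 - t) *: y) <= t * f x + (1 - t) * f y.

Definition proper_fun (g : V -> \bar R) : Prop :=
  (forall x, -oo < g x)%E /\ (exists x, g x < +oo)%E.

Definition closed_fun (g : V -> \bar R) : Prop :=
  closed [set p : V * R | (g p.1 <= p.2%:E)%E].

Definition convex_efun (g : V -> \bar R) : Prop :=
  forall (x y : V) (t : R), 0 < t -> t < 1 ->
    (g (t *: x + (1 - t) *: y)%R <= t%:E * g x + (1 - t)%:E * g y)%E.

(* p is a minimizer of  h(z) + 1/2 ||z - v||^2,  i.e. p = Prox_h(v)
   (the minimizer is unique for proper closed convex h), here with h = c * g *)
Definition is_prox_scaled (c : R) (g : V -> \bar R) (v p : V) : Prop :=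
  forall z, (c%:E * g p + (2^-1 * enorm (p - v) ^+ 2)%:E
             <= c%:E * g z + (2^-1 * enorm (z - v) ^+ 2)%:E)%E.

(* extrapolated point y^k = x^k + beta_k (x^k - x^{k-1}), with x^{-1} = x^0
   (for k = 0, k.-1 = 0 so y^0 = x^0) *)
Definition extrap (x : nat -> V) (beta : nat -> R) (k : nat) : V :=
  x k + beta k *: (x k - x k.-1).

Definition algorithm1 (g : V -> \bar R) (gradf : V -> V) (L l : R)
    (beta : nat -> R) (x : nat -> V) : Prop :=
  (g (x 0%N) < +oo)%E /\
  (forall k, 0 <= beta k <= Num.sqrt (L / (L + l))) /\
  (forall k, is_prox_scaled L^-1 g
               (extrap x beta k - L^-1 *: gradf (extrap x beta k)) (x k.+1)).
End Defs.

(* Let H_k = F(x^k) + L/2 |x^k - x^(k-1)|^2.  The descent lemma for f1, the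
   gradient inequalities of the convex f1, f2, the descent lemma for f2 and the
   optimality of the proximal step give the sufficient decrease
     H_(k+1) <= H_k - (L - (L + l) bb^2)/2 |x^k - x^(k-1)|^2,   bb = sup beta_k,
   whose constant is positive exactly because bb < sqrt(L/(L+l)).  As F is
   bounded below, H_k converges, the steps x^k - x^(k-1) tend to 0, and F(x^k)
   tends to the same limit zeta.  At an accumulation point w, closedness of g
   and continuity of f give F(w) <= zeta, while the proximal inequality tested
   at w along iterates close to w gives zeta <= F(w). *)

From HB Require Import structures.
From mathcomp Require Import all_boot all_order all_algebra.
From mathcomp Require Import all_classical all_reals all_analysis.
From mathcomp Require Import ring lra.
Import Order.TTheory GRing.Theory Num.Theory.
Import numFieldNormedType.Exports.
Local Open Scope classical_set_scope.
Local Open Scope ring_scope.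
Set Implicit Arguments. Unset Strict Implicit. Unset Printing Implicit Defensive.

Section Euclidean.
Variables (R : realType) (n : nat).
Implicit Types (u v w : 'rV[R]_n) (a : R).

Lemma dotvC u v : dotv u v = dotv v u.
Proof. by apply: eq_bigr => i _; rewrite mulrC. Qed.

Lemma dotvDl u v w : dotv (u + v) w = dotv u w + dotv v w.
Proof. by rewrite /dotv -big_split; apply: eq_bigr => i _; rewrite mxE mulrDl. Qed.

Lemma dotvZl a u w : dotv (a *: u) w = a * dotv u w.
Proof. by rewrite /dotv mulr_sumr; apply: eq_bigr => i _; rewrite mxE mulrA. Qed.

Lemma dotvNl u w : dotv (- u) w = - dotv u w.
Proof. by rewrite -scaleN1r dotvZl mulN1r. Qed.

Lemma dotvBl u v w : dotv (u - v) w = dotv u w - dotv v w.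
Proof. by rewrite dotvDl dotvNl. Qed.

Lemma dotvDr u v w : dotv w (u + v) = dotv w u + dotv w v.
Proof. by rewrite dotvC dotvDl !(dotvC w). Qed.

Lemma dotvZr a u w : dotv w (a *: u) = a * dotv w u.
Proof. by rewrite dotvC dotvZl dotvC. Qed.

Lemma dotvNr u w : dotv w (- u) = - dotv w u.
Proof. by rewrite dotvC dotvNl dotvC. Qed.

Lemma dotv0l w : dotv 0 w = 0.
Proof. by rewrite /dotv big1 // => i _; rewrite mxE mul0r. Qed.

Lemma dotv_sqrD u v : dotv (u + v) (u + v) = dotv u u + 2 * dotv u v + dotv v v.
Proof. rewrite dotvDl !dotvDr (dotvC v u); ring. Qed.

Lemma dotv_sqrB u v : dotv (u - v) (u - v) = dotv u u - 2 * dotv u v + dotv v v.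
Proof. rewrite dotv_sqrD dotvNr dotvNl dotvNr opprK; ring. Qed.

Lemma dotv_ge0 u : 0 <= dotv u u.
Proof. by apply: sumr_ge0 => i _; rewrite -expr2 sqr_ge0. Qed.

Lemma dotv_eq0 u : dotv u u = 0 -> u = 0.
Proof.
move=> /eqP; rewrite psumr_eq0 => [/allP u0|i _]; last by rewrite -expr2 sqr_ge0.
apply/rowP => i; rewrite mxE.
by have := u0 i (mem_index_enum i); rewrite -expr2 sqrf_eq0 => /eqP.
Qed.

Lemma enorm_ge0 u : 0 <= enorm u.
Proof. exact: sqrtr_ge0. Qed.

Lemma enorm_sqr u : enorm u ^+ 2 = dotv u u.
Proof. by rewrite /enorm sqr_sqrtr // dotv_ge0. Qed.

Lemma enorm_eq0 u : enorm u = 0 -> u = 0.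
Proof. by move=> u0; apply: dotv_eq0; rewrite -enorm_sqr u0 expr0n. Qed.

Lemma enormZ a u : enorm (a *: u) = `|a| * enorm u.
Proof. by rewrite /enorm dotvZl dotvZr mulrA -expr2 sqrtrM ?sqr_ge0 // sqrtr_sqr. Qed.

Lemma enormN u : enorm (- u) = enorm u.
Proof. by rewrite -scaleN1r enormZ normrN normr1 mul1r. Qed.

Lemma enormBC u v : enorm (u - v) = enorm (v - u).
Proof. by rewrite -enormN opprB. Qed.

Lemma cauchy_schwarz u v : dotv u v <= enorm u * enorm v.
Proof.
have [uv0|uv_neq0] := eqVneq (enorm u * enorm v) 0.
  move: uv0 => /eqP; rewrite mulf_eq0 => /orP[]/eqP/[dup]/enorm_eq0-> ->.
    by rewrite dotv0l mul0r.
  by rewrite dotvC dotv0l mulr0.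
have uv_gt0 : 0 < enorm u * enorm v by rewrite lt_def uv_neq0 mulr_ge0 ?enorm_ge0.
have := dotv_ge0 (enorm v *: u - enorm u *: v).
rewrite dotv_sqrB !dotvZl !dotvZr -!enorm_sqr => h.
rewrite -(ler_pM2l uv_gt0); nra.
Qed.

Lemma ler_enormD u v : enorm (u + v) <= enorm u + enorm v.
Proof.
rewrite -(@ler_pXn2r _ 2) ?nnegrE ?addr_ge0 ?enorm_ge0 //.
by rewrite enorm_sqr dotv_sqrD -!enorm_sqr; have := cauchy_schwarz u v; nra.
Qed.

Lemma ler_enormB u v : enorm (u - v) <= enorm u + enorm v.
Proof. by have := ler_enormD u (- v); rewrite enormN. Qed.

Lemma ler_enorm_distD u v w : enorm (u - w) <= enorm (u - v) + enorm (v - w).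
Proof. by apply: le_trans (ler_enormD _ _); rewrite addrA subrK. Qed.

Lemma entry_le_enorm u i : `|u ord0 i| <= enorm u.
Proof.
rewrite -(@ler_pXn2r _ 2) ?nnegrE ?enorm_ge0 //.
rewrite enorm_sqr /dotv real_normK ?num_real // (bigD1 i) //= -expr2 lerDl.
by apply: sumr_ge0 => j _; rewrite -expr2 sqr_ge0.
Qed.

(* [`|u|] is the sup norm, which defines the topology of ['rV_n]. *)
Lemma entry_le_mxnorm u i : `|u ord0 i| <= `|u|.
Proof.
rewrite [leRHS]/Num.Def.normr /= mx_normrE; apply/bigmax_geP; right.
by exists (ord0, i).
Qed.

Lemma mxnorm_le_enorm u : `|u| <= enorm u.
Proof.
rewrite [leLHS]/Num.Def.normr /= mx_normrE; apply/bigmax_leP; split=> [|[i j] _].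
  exact: enorm_ge0.
by rewrite [i]ord1; exact: entry_le_enorm.
Qed.

Lemma enorm_le_mxnorm u : enorm u <= n.+1%:R * `|u|.
Proof.
rewrite -(@ler_pXn2r _ 2) ?nnegrE ?mulr_ge0 ?enorm_ge0 //.
rewrite enorm_sqr /dotv (@le_trans _ _ (\sum_(i < n) `|u| ^+ 2)) //.
  apply: ler_sum => i _; rewrite -expr2 -real_normK ?num_real //.
  by rewrite lerXn2r ?nnegrE // entry_le_mxnorm.
rewrite sumr_const card_ord exprMn -[_ *+ n]mulr_natl ler_wpM2r ?sqr_ge0 //.
by rewrite -natrX ler_nat (leq_trans (leqnSn n)) // expnS expn1 leq_pmulr.
Qed.

End Euclidean.

Lemma le_of_le_add_small (R : realFieldType) (a b c : R) : 0 <= c ->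
  (forall t, 0 < t -> t < 1 -> a <= b + t * c) -> a <= b.
Proof.
move=> c0 ab; apply/ler_addgt0Pr => e e0.
have c1 : 0 < c + 1 by rewrite ltr_wpDl.
pose t := Num.min 2^-1 (e / (c + 1)).
have t0 : 0 < t by rewrite lt_min invr_gt0 ltr0n divr_gt0.
have t1 : t < 1 by rewrite gt_min invf_lt1 ?ltr0n ?ltr1n.
have te : t * (c + 1) <= e by rewrite -ler_pdivlMr // ge_min lexx orbT.
by apply: le_trans (ab t t0 t1) _; rewrite lerD2l; nra.
Qed.

Section Smooth.
Variables (R : realType) (n : nat).
Local Notation V := 'rV[R]_n.
Implicit Types (f : V -> R) (G : V -> V) (x y d : V).

Lemma is_derive_line f G x d (t : R) : is_gradient f G ->
  is_derive t 1 (fun s => f (x + s *: d)) (dotv (G (x + t *: d)) d).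
Proof.
move=> fG; have [fdiff fd] := fG (x + t *: d).
have E : (fun h : R => h^-1 *: (((fun s => f (x + s *: d)) \o shift t) (h *: 1)
               - f (x + t *: d))) =
         (fun h : R => h^-1 *: ((f \o shift (x + t *: d)) (h *: d) - f (x + t *: d))).
  apply: funext => h /=; congr (_ *: (f _ - _)).
  by rewrite /shift /= [h%:A]mulr1 scalerDl addrCA addrA.
split; first by rewrite /derivable E; exact: diff_derivable.
by rewrite /derive E -/(derive f (x + t *: d) d) deriveE.
Qed.

Lemma descent_lemma f G M : is_gradient f G -> lipschitz_with G M ->
  forall x y, f y <= f x + dotv (G x) (y - x) + M / 2 * enorm (y - x) ^+ 2.
Proof.
move=> fG GM x y; set d := y - x; set a := dotv (G x) d; set b := M / 2 * enorm d ^+ 2.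
pose phi s := f (x + s *: d) - s * a - b * s ^+ 2.
pose dphi t := dotv (G (x + t *: d)) d - a - b * (2 * t).
have phi' (t : R) : is_derive t 1 phi (dphi t).
  have -> : phi = (fun s => f (x + s *: d)) - (fun s => s * a) - (fun s => b * s ^+ 2).
    by [].
  apply: is_deriveB; first apply: is_deriveB; first exact: is_derive_line.
    by apply: is_derive_eq; rewrite scaler0 add0r [a%:A]mulr1.
  by apply: is_derive_eq; rewrite [t%:A]mulr1 /GRing.scale /=; ring.
have [c /[!in_itv] /andP[c0 c1] phi01] := @MVT R phi dphi 0 1 ltr01 (fun t _ => phi' t)
   (derivable_within_continuous (fun t _ => @ex_derive _ _ _ _ _ _ _ (phi' t))).
have dphi_le : dotv (G (x + c *: d)) d - a <= b * (2 * c).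
  rewrite /a -dotvBl (le_trans (cauchy_schwarz _ _)) //.
  have := GM (x + c *: d) x; rewrite addrAC subrr add0r enormZ gtr0_norm // => Gc.
  have := enorm_ge0 d; have := enorm_ge0 (G (x + c *: d) - G x); rewrite /b; nra.
move: phi01; rewrite /phi /dphi scale1r scale0r addr0 mul0r subr0 expr0n /= mulr0 subr0.
by rewrite mul1r expr1n !mulr1 [x + d]addrC /d subrK -/d; lra.
Qed.

Lemma is_gradientN f G : is_gradient f G -> is_gradient (- f) (- G).
Proof.
move=> fG z; have [fdiff fd] := fG z; split; first exact: differentiableN.
by move=> h; rewrite diffN // -[LHS]/(- ('d f z h)) fd dotvNl.
Qed.

Lemma descent_lemma_lower f G M : is_gradient f G -> lipschitz_with G M ->
  forall x y, f x + dotv (G x) (y - x) - M / 2 * enorm (y - x) ^+ 2 <= f y.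
Proof.
move=> fG GM x y.
have NGM : lipschitz_with (- G) M by move=> u v; rewrite !fctE -opprD enormN.
by have := descent_lemma (is_gradientN fG) NGM x y; rewrite !fctE dotvNl; lra.
Qed.

Lemma convex_combE x y (t : R) : t *: y + (1 - t) *: x = x + t *: (y - x).
Proof. by rewrite scalerBl scale1r scalerBr addrCA. Qed.

Lemma convex_gradient_le f G M : is_gradient f G -> lipschitz_with G M ->
  convex_fun f -> forall x y, f x + dotv (G x) (y - x) <= f y.
Proof.
move=> fG GM fconv x y; set d := y - x.
apply: (@le_of_le_add_small _ _ _ (`|M| / 2 * enorm d ^+ 2)) => [|t t0 t1].
  by rewrite mulr_ge0 ?divr_ge0 ?exprn_ge0 ?enorm_ge0.
have fyx := fconv y x t (ltW t0) (ltW t1); rewrite convex_combE -/d in fyx.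
have := descent_lemma_lower fG GM x (x + t *: d).
rewrite [x + _ - x]addrC addKr dotvZr enormZ gtr0_norm // exprMn => fx.
have : M / 2 * (t ^+ 2 * enorm d ^+ 2) <= `|M| / 2 * (t ^+ 2 * enorm d ^+ 2).
  by rewrite ler_wpM2r ?(mulr_ge0 (sqr_ge0 _) (sqr_ge0 _)) // ler_pM2r ?ler_norm.
move=> fM; rewrite -(ler_pM2l t0); nra.
Qed.

End Smooth.

Section Prox.
Variables (R : realType) (n : nat).
Local Notation V := 'rV[R]_n.

Lemma fin_num_scaleD_le (e : \bar R) (c r s : R) : 0 < c -> (-oo < e)%E ->
  (c%:E * e + r%:E <= s%:E)%E -> e \is a fin_num.
Proof. by move=> c0; case: e => [x| |] //= _; rewrite mulry gtr0_sg // mul1e. Qed.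

(* Compare the prox objective at p and at p + t (z - p), use the convexity of
   g, divide by t and let t tend to 0. *)
Lemma is_prox_scaled_le (c : R) (g : V -> \bar R) (v p z : V) (gz : R) :
  0 < c -> (forall x, -oo < g x)%E -> convex_efun g -> is_prox_scaled c g v p ->
  g z = gz%:E ->
  exists gp : R, g p = gp%:E /\ c * gp <= c * gz + dotv (p - v) (z - p).
Proof.
move=> c0 gNoo gconv pprox gzE.
have := pprox z; rewrite gzE -EFinM -EFinD => pz.
have /fineK gpE := fin_num_scaleD_le c0 (gNoo p) pz.
set gp := fine (g p) in gpE; exists gp; split => //.
apply: (@le_of_le_add_small _ _ _ (enorm (z - p) ^+ 2 / 2)) => [|t t0 t1].
  by rewrite divr_ge0 ?exprn_ge0 ?enorm_ge0.
set zt := t *: z + (1 - t) *: p.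
have := gconv z p t t0 t1; rewrite gzE -gpE -!EFinM -EFinD -/zt => gzt.
have /fineK gztE : g zt \is a fin_num.
  by rewrite fin_numElt gNoo (le_lt_trans gzt) ?ltry.
have := pprox zt; rewrite -gpE -gztE -!EFinM -!EFinD lee_fin => pzt.
rewrite -gztE lee_fin in gzt.
have ztv : zt - v = p - v + t *: (z - p) by rewrite /zt convex_combE addrAC.
rewrite ztv !enorm_sqr (dotv_sqrD (p - v)) dotvZl !dotvZr in pzt.
rewrite enorm_sqr.
set A := dotv (p - v) (p - v) in pzt *; set B := dotv (p - v) (z - p) in pzt *.
set C := dotv (z - p) (z - p) in pzt *.
have := ler_wpM2l (ltW c0) gzt => cgzt.
have : t * (c * gp - c * gz - B - t * (C / 2)) <= 0 by nra.
by rewrite pmulr_rle0 //; lra.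
Qed.

End Prox.

Section EuclideanTopology.
Variables (R : realType) (n : nat).
Local Notation V := 'rV[R]_n.

Lemma nbhs_enorm (w : V) (U : set V) : nbhs w U ->
  exists2 r : R, 0 < r & forall z, enorm (z - w) < r -> U z.
Proof.
move=> /nbhs_ballP[r r0 wrU]; exists r => // z wz; apply: wrU.
by rewrite -ball_normE /ball_ /= (le_lt_trans (mxnorm_le_enorm _)) // enormBC.
Qed.

Lemma cluster_enorm (x : nat -> V) (w : V) (P : nat -> Prop) (r : R) :
  cluster (x @ \oo) w -> (\forall k \near \oo, P k) -> 0 < r ->
  exists k, P k /\ enorm (x k - w) < r.
Proof.
move=> xw [N _ NP] r0; have n1_gt0 : 0 < n.+1%:R :> R by rewrite ltr0n.
have [||_ [[k [Nk ->]] wxk]] :=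
    xw [set z | exists k, (N <= k)%N /\ z = x k] (ball w (r / n.+1%:R)).
- by exists N => // k /= Nk; exists k.
- by apply: nbhsx_ballx; rewrite divr_gt0.
exists k; split; first exact: NP.
move: wxk; rewrite -ball_normE /ball_ /= -normrN opprB ltr_pdivlMr // mulrC => xkw.
exact: le_lt_trans (enorm_le_mxnorm _) xkw.
Qed.

Lemma continuous_enorm (f : V -> R) (w : V) (e : R) : {for w, continuous f} ->
  0 < e -> exists2 d : R, 0 < d & forall z, enorm (z - w) < d -> `|f w - f z| < e.
Proof. by move=> /cvgrPdist_lt/[apply]/nbhs_enorm. Qed.

Lemma closed_fun_le (g : V -> \bar R) (w : V) (c : R) : closed_fun g ->
  (forall e r : R, 0 < e -> 0 < r ->
     exists z, enorm (z - w) < r /\ (g z <= (c + e)%:E)%E) ->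
  (g w <= c%:E)%E.
Proof.
move=> gclosed near_le; apply/lee_addgt0Pr => e e0; rewrite -EFinD.
suff : closure [set p : V * R | (g p.1 <= p.2%:E)%E] (w, c + e).
  by rewrite -(proj1 (closure_id _) gclosed).
move=> B [[U W] [/nbhs_enorm[r r0 rU] Wce] UWB].
have [z [zw gz]] := near_le e r e0 r0.
by exists (z, c + e); split => //; apply: UWB; split => /=; [exact: rU | exact: nbhs_singleton].
Qed.

End EuclideanTopology.

Lemma sufficient_decrease_cvg (R : realType) (a d : nat -> R) (c delta m : R) :
  0 <= c -> 0 < delta -> (forall k, 0 <= d k) -> (forall k, m <= a k) ->
  (forall k, a k.+1 + c * d k.+1 <= a k + c * d k - delta * d k) ->
  d @ \oo --> 0 /\ cvgn a.
Proof.
move=> c0 delta0 d0 am decr; pose E k := a k + c * d k.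
have Edecr : nonincreasing_seq E.
  apply/nonincreasing_seqP => k; have := decr k; have := d0 k; rewrite /E; nra.
have Elb : has_lbound (range E).
  by exists m => _ [k _ <-]; have := am k; have := d0 k; rewrite /E; nra.
have EE := nonincreasing_cvgn Edecr Elb; set zeta := inf _ in EE.
have d_cvg : d @ \oo --> 0.
  apply: (@squeeze_cvgr _ _ _ _ (fun=> 0) (fun k => delta^-1 * (E k - E k.+1))).
  - by near=> k; rewrite d0 /= ler_pdivlMl //; have := decr k; rewrite /E; lra.
  - exact: cvg_cst.
  - rewrite -(mulr0 delta^-1) -(subrr zeta); apply: cvgMr; apply: cvgB => //.
    by rewrite cvg_shiftS.
split=> //; apply/cvg_ex; exists zeta.
have -> : a = E - c \*: d by apply: funext => k; rewrite /E !fctE addrK.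
rewrite -[zeta]subr0 -(scaler0 _ c); apply: cvgB => //; exact: cvgZr.
Unshelve. all: by end_near.
Qed.

Lemma sqr_lt_of_lt_sqrt_div (R : realType) (L l b : R) : 0 < L -> 0 <= l -> 0 <= b ->
  b < Num.sqrt (L / (L + l)) -> (L + l) * b ^+ 2 < L.
Proof.
move=> L0 l0 b0 b_lt; have Ll0 : 0 < L + l by rewrite ltr_wpDr.
rewrite mulrC -ltr_pdivlMr // -[_ / _]sqr_sqrtr ?divr_ge0 ?ltW //.
by rewrite ltrXn2r.
Qed.

Section ProxGradExtrapolation.
Variables (R : realType) (n : nat).
Local Notation V := 'rV[R]_n.
Variables (g : V -> \bar R) (f1 f2 : V -> R) (G1 G2 : V -> V) (L l : R).
Hypotheses (gNoo : forall z, (-oo < g z)%E) (gconv : convex_efun g)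
  (f1conv : convex_fun f1) (f2conv : convex_fun f2)
  (f1G : is_gradient f1 G1) (f2G : is_gradient f2 G2)
  (L_gt0 : 0 < L) (l_ge0 : 0 <= l) (G1L : lipschitz_with G1 L) (G2l : lipschitz_with G2 l).

Let f z := f1 z - f2 z.
Let G z := G1 z - G2 z.

Lemma prox_grad_decrease (x y p : V) (gx : R) :
  is_prox_scaled L^-1 g (y - L^-1 *: G y) p -> g x = gx%:E ->
  exists gp, g p = gp%:E /\
    f p + gp + L / 2 * enorm (x - p) ^+ 2 <= f x + gx + (L + l) / 2 * enorm (x - y) ^+ 2.
Proof.
move=> p_prox gxE; have Linv_gt0 : 0 < L^-1 by rewrite invr_gt0.
have [gp [gpE gp_le]] := is_prox_scaled_le Linv_gt0 gNoo gconv p_prox gxE.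
exists gp; split => //.
have f1p := descent_lemma f1G G1L y p.
have f2p := convex_gradient_le f2G G2l f2conv y p.
have f1x := convex_gradient_le f1G G1L f1conv y x.
have f2x := descent_lemma f2G G2l y x.
rewrite /f; set a := p - y in f1p f2p gp_le *; set b := x - p in gp_le *.
have xyE : x - y = b + a by rewrite /a /b addrA subrK.
have pvE : p - (y - L^-1 *: G y) = a + L^-1 *: G y by rewrite opprB addrCA addrC.
rewrite xyE in f1x f2x *; rewrite pvE in gp_le; clearbody a b.
have {}gp_le : gp <= gx + L * dotv a b + dotv (G y) b.
  have := ler_wpM2l (ltW L_gt0) gp_le; rewrite mulrDr !mulrA divff ?gt_eqF // !mul1r.
  by rewrite dotvDl dotvZl mulrDr mulrA divff ?gt_eqF // mul1r addrA.
rewrite /G dotvBl (dotvC a b) in gp_le.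
rewrite !enorm_sqr dotv_sqrD in f1p f2x *.
rewrite !dotvDr in f1x f2x.
lra.
Qed.

Lemma prox_grad_value_le (y p w : V) (gw : R) :
  is_prox_scaled L^-1 g (y - L^-1 *: G y) p -> g w = gw%:E ->
  exists gp, g p = gp%:E /\
    gp <= gw + (L * enorm (p - y) + enorm (G w) + (L + l) * enorm (y - w)) * enorm (w - p).
Proof.
move=> p_prox gwE; have Linv_gt0 : 0 < L^-1 by rewrite invr_gt0.
have [gp [gpE gp_le]] := is_prox_scaled_le Linv_gt0 gNoo gconv p_prox gwE.
exists gp; split => //.
have {}gp_le : gp <= gw + dotv (L *: (p - y) + G y) (w - p).
  have := ler_wpM2l (ltW L_gt0) gp_le; rewrite mulrDr !mulrA divff ?gt_eqF // !mul1r -dotvZl.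
  by rewrite opprB scalerDr scalerBr scalerA divff ?gt_eqF // scale1r scalerBr [G y - _]addrC addrA.
have Gyw : enorm (G y) <= enorm (G w) + (L + l) * enorm (y - w).
  have := ler_enormD (G w) (G y - G w); rewrite [G w + _]addrC subrK => /le_trans; apply.
  have -> : G y - G w = (G1 y - G1 w) - (G2 y - G2 w) by rewrite /G !opprD !opprK addrACA.
  by rewrite lerD2l mulrDl (le_trans (ler_enormB _ _)) // lerD.
have := cauchy_schwarz (L *: (p - y) + G y) (w - p).
have := ler_enormD (L *: (p - y)) (G y); rewrite enormZ gtr0_norm //.
have := enorm_ge0 (w - p); nra.
Qed.

Let F z := ((f z)%:E + g z)%E.

Variables (beta : nat -> R) (x : nat -> V) (bb : R).
Hypotheses (gx0_lty : (g (x 0%N) < +oo)%E)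
  (beta_ge0 : forall k, 0 <= beta k) (beta_le : forall k, beta k <= bb)
  (bb_lt : (L + l) * bb ^+ 2 < L)
  (x_prox : forall k,
     is_prox_scaled L^-1 g (extrap x beta k - L^-1 *: G (extrap x beta k)) (x k.+1)).

Let gx k := fine (g (x k)).
Let Fx k := f (x k) + gx k.
Let D k := enorm (x k - x k.-1) ^+ 2.

Lemma g_iterateE k : g (x k) = (gx k)%:E.
Proof.
elim: k => [|k IH]; first by rewrite /gx fineK // fin_numElt gNoo gx0_lty.
by have [gp [gpE _]] := prox_grad_decrease (x_prox k) IH; rewrite /gx gpE.
Qed.

Lemma F_iterateE k : F (x k) = (Fx k)%:E.
Proof. by rewrite /F g_iterateE. Qed.

Lemma extrap_distE k : enorm (extrap x beta k - x k) = beta k * enorm (x k - x k.-1).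
Proof. by rewrite /extrap addrAC subrr add0r enormZ ger0_norm. Qed.

Lemma energy_decrease k :
  Fx k.+1 + L / 2 * D k.+1 <= Fx k + L / 2 * D k - (L - (L + l) * bb ^+ 2) / 2 * D k.
Proof.
have [gp [gpE]] := prox_grad_decrease (x_prox k) (g_iterateE k).
rewrite enormBC -/(D k.+1) enormBC extrap_distE exprMn -/(D k).
have -> : gp = gx k.+1 by rewrite /gx gpE.
have : (L + l) / 2 * (beta k ^+ 2 * D k) <= (L + l) / 2 * (bb ^+ 2 * D k).
  rewrite ler_wpM2l ?divr_ge0 ?addr_ge0 ?(ltW L_gt0) // ler_wpM2r ?exprn_ge0 ?enorm_ge0 //.
  by rewrite lerXn2r ?nnegrE ?(le_trans (beta_ge0 k)).
rewrite /Fx; lra.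
Qed.

Variable xs : V.
Hypothesis xs_min : forall z, (F xs <= F z)%E.

Lemma Fx_lbound : exists m, forall k, m <= Fx k.
Proof.
have := xs_min (x 0%N); rewrite F_iterateE /F.
case gxsE: (g xs) => [r| |]; last by have := gNoo xs; rewrite gxsE.
  by move=> _; exists (f xs + r) => k; have := xs_min (x k); rewrite F_iterateE /F gxsE.
by rewrite addey // leye_eq.
Qed.

Lemma iterate_cvg : D @ \oo --> 0 /\ cvgn Fx.
Proof.
have [m Fxm] := Fx_lbound.
apply: (sufficient_decrease_cvg _ _ _ Fxm energy_decrease) => [|| k].
- by rewrite divr_ge0 // ltW.
- by rewrite divr_gt0 // subr_gt0.
- exact: exprn_ge0 (enorm_ge0 _).
Qed.

Let zeta := limn Fx.

Lemma Fx_cvg : Fx @ \oo --> zeta.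
Proof. exact: iterate_cvg.2. Qed.

Lemma D_cvg : D @ \oo --> 0.
Proof. exact: iterate_cvg.1. Qed.

Lemma F_iterate_cvg : F \o x @ \oo --> zeta%:E.
Proof.
apply: cvg_EFin; first by apply: nearW => k; rewrite /= F_iterateE.
suff -> : fine \o (F \o x) = Fx by exact: Fx_cvg.
by apply: funext => k /=; rewrite F_iterateE.
Qed.

Lemma f_continuous w : {for w, continuous f}.
Proof. exact: cvgB (differentiable_continuous (f1G w).1) (differentiable_continuous (f2G w).1). Qed.

Hypothesis gclosed : closed_fun g.

Lemma cluster_g_le w : cluster (x @ \oo) w -> (g w <= (zeta - f w)%:E)%E.
Proof.
move=> xw; apply: closed_fun_le => // e r e0 r0.
have e2_gt0 : 0 < e / 2 by rewrite divr_gt0.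
have [d d0 fw] := continuous_enorm (@f_continuous w) e2_gt0.
have rd_gt0 : 0 < Num.min r d by rewrite lt_min r0 d0.
have [|k [Fxk]] := cluster_enorm xw (cvgr_lt zeta Fx_cvg (zeta + e / 2) _) rd_gt0.
  by rewrite ltrDl.
rewrite lt_min => /andP[xkr xkd]; exists (x k); split=> //.
have := fw _ xkd; rewrite ltr_norml g_iterateE lee_fin => /andP[].
move: Fxk; rewrite /Fx; lra.
Qed.

Lemma beta_le1 k : beta k <= 1.
Proof.
have bb_ge0 := le_trans (beta_ge0 k) (beta_le k).
have : bb ^+ 2 < 1.
  have := mulr_ge0 l_ge0 (sqr_ge0 bb); rewrite -(ltr_pM2l L_gt0) mulr1; move: bb_lt; nra.
by move=> bb2_lt1; apply: le_trans (beta_le k) _; nra.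
Qed.

Lemma cluster_iterate_near w (e eta : R) : cluster (x @ \oo) w -> 0 < e -> 0 < eta ->
  exists k, [/\ zeta - e < Fx k.+1, enorm (x k.+1 - w) < 2 * eta,
     enorm (x k.+1 - extrap x beta k) < 2 * eta & enorm (extrap x beta k - w) < 2 * eta].
Proof.
move=> xw e0 eta0.
have near_k : \forall k \near \oo, zeta - e < Fx k.+1 /\ D k < eta ^+ 2 /\ D k.+1 < eta ^+ 2.
  have ze : zeta - e < zeta by rewrite gtrBl.
  have [N1 _ FxN] := cvgr_gt zeta Fx_cvg (zeta - e) ze.
  have [N2 _ DN] := cvgr_lt 0 D_cvg (eta ^+ 2) (exprn_gt0 2 eta0).
  exists (maxn N1 N2) => // k /=; rewrite geq_max => /andP[k1 k2].
  by split; [apply: FxN | split; apply: DN]; rewrite /= ?leqW.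
have [k [[Fk [Dk Dk1]] xkw]] := cluster_enorm xw near_k eta0.
have lt_eta (u : V) : enorm u ^+ 2 < eta ^+ 2 -> enorm u < eta.
  by rewrite ltr_pXn2r ?nnegrE ?enorm_ge0 ?ltW.
have {Dk}xk0 := lt_eta (x k - x k.-1) Dk; have {Dk1}xk1 := lt_eta (x k.+1 - x k) Dk1.
have yk : enorm (extrap x beta k - x k) < eta.
  by rewrite extrap_distE (le_lt_trans _ xk0) // ler_piMl ?enorm_ge0 ?beta_le1.
have := ler_enorm_distD (x k.+1) (x k) w; have := ler_enorm_distD (extrap x beta k) (x k) w.
have := ler_enorm_distD (x k.+1) (x k) (extrap x beta k); rewrite (enormBC (x k)).
by exists k; split=> //; lra.
Qed.

Lemma cluster_g_ge w gw : cluster (x @ \oo) w -> g w = gw%:E -> zeta <= f w + gw.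
Proof.
move=> xw gwE; apply/ler_addgt0Pr => e e0.
pose M := 2 * L + enorm (G w) + 2 * (L + l) + 1.
have M_gt0 : 0 < M by rewrite /M; have := enorm_ge0 (G w); have := L_gt0; have := l_ge0; lra.
have e4_gt0 : 0 < e / 4 by rewrite divr_gt0.
have [d d0 fw] := continuous_enorm (@f_continuous w) e4_gt0.
pose eta := Num.min 1 (Num.min (d / 2) (e / (4 * M))).
have eta_gt0 : 0 < eta by rewrite !lt_min ltr01 !divr_gt0 // mulr_gt0.
have [eta1 eta_d eta_e] : [/\ eta <= 1, eta <= d / 2 & eta <= e / (4 * M)].
  by rewrite !ge_min !lexx !orbT.
have [k [Fk pw py yw]] := cluster_iterate_near xw e4_gt0 eta_gt0.
have [gp [gpE gp_le]] := prox_grad_value_le (x_prox k) gwE.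
have gpE' : gp = gx k.+1 by rewrite /gx gpE.
have /andP[fwp _] : - (e / 4) < f w - f (x k.+1) < e / 4.
  by rewrite -ltr_norml fw // (lt_le_trans pw) // -ler_pdivlMl // mulrC.
set B := _ + _ + _ in gp_le.
have B_le : B <= M by have := L_gt0; have := l_ge0; rewrite /B /M; nra.
have Me : M * (2 * eta) <= e / 2.
  by move: eta_e; rewrite ler_pdivlMr ?mulr_gt0 // => eta_e; lra.
have B_ge0 : 0 <= B by rewrite /B !addr_ge0 ?mulr_ge0 ?enorm_ge0 ?addr_ge0 ?(ltW L_gt0).
have prod_le : B * enorm (x k.+1 - w) <= M * (2 * eta).
  by rewrite ler_pM ?enorm_ge0 // ltW.
rewrite (enormBC w) gpE' in gp_le; move: Fk; rewrite /Fx; lra.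
Qed.

Lemma F_cluster w : cluster (x @ \oo) w -> F w = zeta%:E.
Proof.
move=> xw; have := cluster_g_le xw; rewrite /F.
case gwE: (g w) => [gw| |]; last by have := gNoo w; rewrite gwE.
  rewrite lee_fin -EFinD => gw_le; congr (_%:E); apply/le_anti.
  by rewrite (cluster_g_ge xw gwE) andbT -lerBrDl.
by rewrite leye_eq.
Qed.

Lemma prox_grad_extrap_objective_cvg :
  exists zeta, F \o x @ \oo --> zeta%:E /\ forall w, cluster (x @ \oo) w -> F w = zeta%:E.
Proof. by exists zeta; split; [exact: F_iterate_cvg | exact: F_cluster]. Qed.

End ProxGradExtrapolation.

Theorem proposition3p5 (R : realType) (n : nat)
  (g : 'rV[R]_n -> \bar R) (f1 f2 : 'rV[R]_n -> R) (G1 G2 : 'rV[R]_n -> 'rV[R]_n)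
  (L l : R) (beta : nat -> R) (x : nat -> 'rV[R]_n) :
  proper_fun g -> closed_fun g -> convex_efun g ->
  convex_fun f1 -> convex_fun f2 ->
  is_gradient f1 G1 -> is_gradient f2 G2 ->
  0 < L -> 0 <= l -> l <= L ->
  lipschitz_with G1 L -> lipschitz_with G2 l ->
  let F := fun z => ((f1 z - f2 z)%:E + g z)%E in
  (-oo < ereal_inf (range F))%E ->
  (exists xs, forall z, (F xs <= F z)%E) ->
  algorithm1 g (fun z => G1 z - G2 z) L l beta x ->
  sup (range beta) < Num.sqrt (L / (L + l)) ->
  exists zeta : R,
    (F \o x @ \oo --> zeta%:E) /\
    (forall w, cluster (x @ \oo) w -> F w = zeta%:E).
Proof.
move=> [gNoo _] gclosed gconv f1conv f2conv f1G f2G L_gt0 l_ge0 _ G1L G2l F _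
  [xs xs_min] [gx0_lty [beta_bnd x_prox]] sup_lt.
have beta_ge0 k : 0 <= beta k by case/andP: (beta_bnd k).
have beta_le k : beta k <= sup (range beta).
  apply: ub_le_sup; last by exists k.
  by exists (Num.sqrt (L / (L + l))) => _ [j _ <-]; case/andP: (beta_bnd j).
have sup_ge0 := le_trans (beta_ge0 0%N) (beta_le 0%N).
apply: (prox_grad_extrap_objective_cvg gNoo gconv f1conv f2conv f1G f2G L_gt0 l_ge0 G1L G2l
  gx0_lty beta_ge0 beta_le _ x_prox xs_min gclosed).
exact: sqr_lt_of_lt_sqrt_div L_gt0 l_ge0 sup_ge0 sup_lt.
Qed.
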